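(* Let $n\geq 3$, $k\in\mathbb{Z}_n$ with $k\neq 0$ and $2k\not\equiv 0\pmod n$, and let $b\in\{1,2,3\}$. Let $C$ be a $(1,b)$-regular set of $\mathrm{GP}(n,k)$. Then $$|E(C)\cap E(U)|=|E(C)\cap E(V)|\quad\text{and}\quad 2|E(C)\cap E(U)|+|E(C)\cap E(U,V)|=\frac{bn}{2+b}.$$
   Context: For an integer $n\geq 3$ and a nonzero $k\in\mathbb{Z}_n$, the generalized Petersen graph $\mathrm{GP}(n,k)$ is the simple graph with vertex set $\{u_i,v_i\mid i\in\mathbb{Z}_n\}$ and edges $u_iu_{i+1}$, $u_iv_i$, $v_iv_{i+k}$ for all $i\in\mathbb{Z}_n$ (indices modulo $n$); with $2k\not\equiv0\pmod n$ it is 3-regular. Let $U=\{u_i\mid i\in\mathbb{Z}_n\}$ and $V=\{v_i\mid i\in\mathbb{Z}_n\}$. For subsets $A,B$ of vertices, $E(A,B)$ denotes the set of edges with one end in $A$ and the other in $B$, and $E(A)=E(A,A)$ is the set of edges with both ends in $A$. For nonnegative integers $a,b$, a set $C$ of vertices of a graph $\Gamma$ is an $(a,b)$-regular set if the subgraph induced by $C$ is $a$-regular and every vertex of $V(\Gamma)\setminus C$ is adjacent to exactly $b$ vertices of $C$. *)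

From mathcomp Require Import all_boot all_order all_algebra.
Unset Printing Implicit Defensive.

(* Vertices of GP(n,k): inl i = u_i, inr i = v_i, for i in Z_n = 'I_n. *)
Definition gpv (n : nat) : finType := ('I_n + 'I_n)%type.

Definition gp_adj (n k : nat) (x y : gpv n) : bool :=
  match x, y with
  | inl i, inl j => (val j == (val i + 1) %% n) || (val i == (val j + 1) %% n)
  | inr i, inr j => (val j == (val i + k) %% n) || (val i == (val j + k) %% n)
  | inl i, inr j => i == j
  | inr i, inl j => i == j
  end.

Definition Uset (n : nat) : {set gpv n} := [set x | is_inl x].
Definition Vset (n : nat) : {set gpv n} := [set x | ~~ is_inl x].

Definition gp_edges (n k : nat) : {set {set gpv n}} :=
  [set e : {set gpv n} | [exists x, exists y, (e == [set x; y]) && gp_adj n k x y]].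

Definition Eab (n k : nat) (A B : {set gpv n}) : {set {set gpv n}} :=
  [set e in gp_edges n k |
     [exists x in A, exists y in B, (e == [set x; y]) && gp_adj n k x y]].

Definition Ein (n k : nat) (A : {set gpv n}) := Eab n k A A.

Definition regular_set (n k a b : nat) (C : {set gpv n}) : Prop :=
  (forall x, x \in C -> #|[set y in C | gp_adj n k x y]| = a) /\
  (forall x, x \notin C -> #|[set y in C | gp_adj n k x y]| = b).

From mathcomp Require Import all_boot all_order all_algebra zify.
Import GRing.Theory Num.Theory.

Set Implicit Arguments.
Unset Strict Implicit.
Unset Printing Implicit Defensive.

(* Since C induces a perfect matching, |U ∩ C| = 2 x + z and |V ∩ C| = 2 y + z,
   where x, y, z count the matching edges inside U, inside V and between U and V.
   Counting the adjacent pairs (u, c) with u in U, c in C in two ways, and using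
   that every vertex of U has two neighbours in U and one in V, gives
   |U ∩ C| + b |U \ C| = 2 |U ∩ C| + |V ∩ C|, and symmetrically for V.
   Subtracting the two identities yields |U ∩ C| = |V ∩ C| (hence x = y), and then
   (2 + b) |U ∩ C| = b n. *)

Lemma card_rel_exchange (T S : finType) (A : {set T}) (B : {set S}) (R : T -> S -> bool) :
  \sum_(x in A) #|[set y in B | R x y]| = \sum_(y in B) #|[set x in A | R x y]|.
Proof.
have card_sep_sum (I : finType) (D : {set I}) (P : pred I) :
    #|[set i in D | P i]| = \sum_(i in D) (P i : nat).
  by rewrite -sum1dep_card big_mkcondr /=; apply: eq_bigr => i _; case: (P i).
under eq_bigr do rewrite card_sep_sum; under [RHS]eq_bigr do rewrite card_sep_sum.
exact: exchange_big.
Qed.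

Lemma sum_mem_cardI (T : finType) (A B : {set T}) :
  \sum_(x in A) (x \in B : nat) = #|A :&: B|.
Proof.
rewrite (big_setID B) /= [X in _ + X]big1 => [|x /setDP[_ /negbTE ->] //].
by rewrite addn0 -sum1_card; apply: eq_bigr => x /setIP[_ ->].
Qed.

Lemma card_set2I (T : finType) (a b : T) (A : {set T}) : a != b ->
  #|[set a; b] :&: A| = (a \in A) + (b \in A).
Proof.
move=> neq_ab; rewrite -sum_mem_cardI (big_setD1 a) ?set21 //=.
by rewrite setU1K ?big_set1 // in_set1.
Qed.

Lemma modn_lt_double n x : x < 2 * n -> x %% n = if x < n then x else x - n.
Proof.
move=> lt_x2n; case: ifP => lt_xn; first by rewrite modn_small.
have -> : x = (x - n) + n by lia.
by rewrite modnDr modn_small; lia.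
Qed.

Lemma addmod_neq n i d : i < n -> d %% n != 0 -> (i == (i + d) %% n) = false.
Proof.
move=> lt_in d_n0; apply/negbTE/eqP => i_eq; move: d_n0.
have : i + 0 == i + d %[mod n] by rewrite addn0 (modn_small lt_in) -i_eq.
by rewrite eqn_modDl mod0n eq_sym => ->.
Qed.

Lemma eq_addmod_sub n d i j : i < n -> j < n -> d <= n ->
  (i == (j + d) %% n) = (j == (i + n - d) %% n).
Proof.
move=> lt_in lt_jn le_dn; rewrite !modn_lt_double; try lia.
by do 2 case: ifP => ?; apply/eqP/eqP => ?; lia.
Qed.

(* Both the outer cycle (d = 1) and the inner rims (d = k) of GP(n,k) are
   circulant graphs with this neighbourhood. *)
Lemma card_circulant_nbrs n d (i : 'I_n) : d < n -> (2 * d) %% n != 0 ->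
  #|[set j : 'I_n | (val j == (i + d) %% n) || (val i == (j + d) %% n)]| = 2.
Proof.
move=> lt_dn d2_n0; have lt_in := ltn_ord i; have n_gt0 : 0 < n by lia.
pose a : 'I_n := Ordinal (ltn_pmod (i + d) n_gt0).
pose c : 'I_n := Ordinal (ltn_pmod (i + n - d) n_gt0).
have -> : [set j : 'I_n | (val j == (i + d) %% n) || (val i == (j + d) %% n)] = [set a; c].
  by apply/setP => j; rewrite !inE (eq_addmod_sub (ltn_ord i) (ltn_ord j) (ltnW lt_dn)).
suff /negbTE neq_ac : a != c by rewrite cards2 neq_ac.
apply/eqP => /(congr1 val) /=; move: d2_n0.
by rewrite !modn_lt_double; try lia; do 3 case: ifP => ?; lia.
Qed.

Lemma balanced_double_count b n cu cv du dv : 0 < b ->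
  cu + du = n -> cv + dv = n ->
  cu + b * du = 2 * cu + cv -> cv + b * dv = 2 * cv + cu ->
  cu = cv /\ (2 + b) * cu = b * n.
Proof.
move=> b_gt0 eq_u eq_v count_u count_v.
have /eqP : b * du = b * dv by lia.
rewrite eqn_pmul2l // => /eqP eq_d.
have eq_c : cu = cv by lia.
by split=> //; rewrite -eq_u mulnDr; lia.
Qed.

Section GeneralizedPetersen.

Variables n k : nat.

Local Notation nbrs A x := [set y in A | gp_adj n k x y].
Local Notation Ein := (Ein n k).
Local Notation Eab := (Eab n k).

Lemma gp_adjC x y : gp_adj n k x y = gp_adj n k y x.
Proof. by case: x; case: y => i j /=; rewrite 1?orbC // eq_sym. Qed.

Lemma gp_adj_irr x : 1 < n -> k %% n != 0 -> gp_adj n k x x = false.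
Proof.
move=> n_gt1 k_n0; case: x => i /=; rewrite orbb addmod_neq //.
by rewrite modn_small.
Qed.

Lemma setC_Uset : ~: Uset n = Vset n.
Proof. by apply/setP => x; rewrite !inE. Qed.

Lemma setC_Vset : ~: Vset n = Uset n.
Proof. by rewrite -setC_Uset setCK. Qed.

Lemma card_Uset : #|Uset n| = n.
Proof.
have -> : Uset n = inl @: [set: 'I_n].
  by apply/setP => -[i|i]; rewrite !inE ?imset_f //; apply/esym/imsetP => -[].
by rewrite card_imset ?cardsT ?card_ord //; apply: inl_inj.
Qed.

Lemma card_Vset : #|Vset n| = n.
Proof.
by have := cardsC (Uset n); rewrite setC_Uset card_Uset card_sum !card_ord => /addnI.
Qed.

Lemma card_nbrs_Uset x : 2 < n -> #|nbrs (Uset n) x| = if x \in Uset n then 2 else 1.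
Proof.
move=> n_gt2; case: x => i.
- have -> : nbrs (Uset n) (inl i) =
      inl @: [set j : 'I_n | (val j == (i + 1) %% n) || (val i == (j + 1) %% n)].
    apply/setP => -[j|j]; rewrite !inE /=; last by apply/esym/imsetP => -[].
    by rewrite (mem_imset _ _ inl_inj) inE.
  rewrite card_imset; last exact: inl_inj.
  by rewrite card_circulant_nbrs ?modn_small ?inE //; exact: ltnW.
- rewrite (_ : nbrs (Uset n) (inr i) = [set inl i]) ?cards1 ?inE //.
  by apply/setP => -[j|j]; rewrite !inE //= eq_sym.
Qed.

Lemma card_nbrs_Vset x : k < n -> (2 * k) %% n != 0 ->
  #|nbrs (Vset n) x| = if x \in Vset n then 2 else 1.
Proof.
move=> lt_kn k2_n0; case: x => i.
- rewrite (_ : nbrs (Vset n) (inl i) = [set inr i]) ?cards1 ?inE //.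
  by apply/setP => -[j|j]; rewrite !inE //= eq_sym.
- have -> : nbrs (Vset n) (inr i) =
      inr @: [set j : 'I_n | (val j == (i + k) %% n) || (val i == (j + k) %% n)].
    apply/setP => -[j|j]; rewrite !inE /=; first by apply/esym/imsetP => -[].
    by rewrite (mem_imset _ _ inr_inj) inE.
  rewrite card_imset; last exact: inr_inj.
  by rewrite card_circulant_nbrs ?inE.
Qed.

Lemma EinP C e : e \in Ein C ->
  exists a b, [/\ a \in C, b \in C, e = [set a; b] & gp_adj n k a b].
Proof.
by rewrite inE => /andP[_ /exists_inP[a aC /exists_inP[b bC /andP[/eqP-> ab]]]];
  exists a, b.
Qed.

Lemma mem_Eab2 A B a b : a != b -> gp_adj n k a b ->
  ([set a; b] \in Eab A B) = (a \in A) && (b \in B) || (b \in A) && (a \in B).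
Proof.
move=> neq_ab ab; rewrite inE.
have -> : [set a; b] \in gp_edges n k.
  by rewrite inE; apply/existsP; exists a; apply/existsP; exists b; rewrite eqxx ab.
apply/idP/idP => [/exists_inP[x xA /exists_inP[y yB /andP[/eqP eq_e _]]] | ].
  move: neq_ab (set21 a b) (set22 a b); rewrite eq_e !inE.
  move=> neq_ab /orP[]/eqP eq_a /orP[]/eqP eq_b; subst a b;
    by rewrite ?eqxx ?xA ?yB ?orbT in neq_ab *.
case/orP=> /andP[aA bB]; apply/exists_inP.
  by exists a => //; apply/exists_inP; exists b; rewrite // eqxx ab.
by exists b => //; apply/exists_inP; exists a; rewrite // setUC eqxx gp_adjC ab.
Qed.

Lemma EabC A B : Eab A B = Eab B A.
Proof.
suff sub_Eab A' B' : {subset Eab A' B' <= Eab B' A'}.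
  by apply/setP => e; apply/idP/idP; apply: sub_Eab.
move=> e; rewrite !inE => /andP[-> /exists_inP[x xA /exists_inP[y yB /andP[eq_e xy]]]].
apply/exists_inP; exists y => //; apply/exists_inP; exists x => //.
by rewrite setUC eq_e gp_adjC xy.
Qed.

Section PerfectMatching.

Variable C : {set gpv n}.
Hypothesis n_gt1 : 1 < n.
Hypothesis k_n0 : k %% n != 0.
Hypothesis C_matching : forall x, x \in C -> #|nbrs C x| = 1.

Lemma card_Ein_at c : c \in C -> #|[set e in Ein C | c \in e]| = 1.
Proof.
move=> cC; have /eqP/cards1P[m nbrs_c] := C_matching cC.
have : m \in nbrs C c by rewrite nbrs_c set11.
rewrite inE => /andP[mC cm]; apply/eqP/cards1P; exists [set c; m].
apply/setP => e; rewrite in_set in_set1.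
apply/idP/idP => [/andP[/EinP[a [b [aC bC -> ab]]]] | /eqP->].
  have partner x : x \in C -> gp_adj n k c x -> x = m.
    by move=> xC cx; apply/set1P; rewrite -nbrs_c inE xC.
  rewrite !inE => /orP[]/eqP eq_c; [subst a | subst b].
    by rewrite (partner b).
  by rewrite setUC (partner a) // gp_adjC.
have neq_cm : c != m by apply: contraTneq cm => <-; rewrite gp_adj_irr.
by rewrite mem_Eab2 // cC mC set21.
Qed.

Lemma card_matched_side (A : {set gpv n}) :
  #|A :&: C| = 2 * #|Ein C :&: Ein A| + #|Ein C :&: Eab A (~: A)|.
Proof.
transitivity (\sum_(c in A :&: C) #|[set e in Ein C | c \in e]|).
  by rewrite -sum1_card; apply: eq_bigr => c /setIP[_ cC]; rewrite card_Ein_at.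
rewrite card_rel_exchange -!sum_mem_cardI big_distrr -big_split /=.
apply: eq_bigr => _ /EinP[a [b [aC bC -> ab]]].
have neq_ab : a != b by apply: contraTneq ab => ->; rewrite gp_adj_irr.
rewrite (_ : [set c in A :&: C | _] = [set a; b] :&: A); last first.
  by apply/setP => c; rewrite !inE; case: eqP => [->|_]; case: eqP => [->|_];
    rewrite ?aC ?bC ?andbT ?andbF.
rewrite card_set2I // !mem_Eab2 // !inE.
by case: (a \in A); case: (b \in A).
Qed.

End PerfectMatching.

Section RegularSet.

Variables (b : nat) (C : {set gpv n}).
Hypothesis C_regular : regular_set n k 1 b C.

Lemma sum_card_nbrs_regular (A : {set gpv n}) :
  \sum_(x in A) #|nbrs C x| = #|A :&: C| + b * #|A :\: C|.
Proof.
case: C_regular => C_in C_out.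
rewrite (big_setID C) /= -!sum1_card big_distrr /=.
congr (_ + _); apply: eq_bigr => x.
  by case/setIP=> _ /C_in.
by case/setDP=> _ /C_out->; rewrite muln1.
Qed.

Lemma regular_side_count (A : {set gpv n}) :
  (forall y, #|nbrs A y| = if y \in A then 2 else 1) ->
  #|A :&: C| + b * #|A :\: C| = 2 * #|A :&: C| + #|~: A :&: C|.
Proof.
move=> card_nbrs_A; rewrite -sum_card_nbrs_regular card_rel_exchange.
transitivity (\sum_(y in C) if y \in A then 2 else 1).
  apply: eq_bigr => y _; rewrite -card_nbrs_A.
  by apply: eq_card => x; rewrite !inE gp_adjC.
rewrite (big_setID A) /= [X in X + _](eq_bigr (fun=> 2)) => [|y /setIP[_ ->] //].
rewrite [X in _ + X](eq_bigr (fun=> 1)) => [|y /setDP[_ /negbTE->] //].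
by rewrite !sum_nat_const muln1 mulnC setDE !(setIC C).
Qed.

End RegularSet.

End GeneralizedPetersen.

Theorem lemma4p1 (n : nat) (k : 'I_n) (b : nat) (C : {set gpv n}) :
  3 <= n -> (0 < val k)%N -> (2 * val k) %% n != 0 ->
  (1 <= b <= 3)%N ->
  regular_set n (val k) 1 b C ->
  #|Ein n (val k) C :&: Ein n (val k) (Uset n)| = #|Ein n (val k) C :&: Ein n (val k) (Vset n)|
  /\
  ((2 * #|Ein n (val k) C :&: Ein n (val k) (Uset n)|
     + #|Ein n (val k) C :&: Eab n (val k) (Uset n) (Vset n)|)%:R : rat)
    = ((b * n)%:R / (2 + b)%:R)%R.
Proof.
move=> n_gt2 k_gt0 k2_n0 /andP[b_gt0 _] C_reg.
have n_gt1 : 1 < n := ltnW n_gt2.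
have k_n0 : val k %% n != 0 by rewrite modn_small ?ltn_ord -?lt0n.
have matched := card_matched_side n_gt1 k_n0 C_reg.1.
have eq_U := regular_side_count C_reg (card_nbrs_Uset _ ^~ n_gt2).
have eq_V := regular_side_count C_reg (fun y => card_nbrs_Vset y (ltn_ord k) k2_n0).
rewrite setC_Uset in eq_U; rewrite setC_Vset in eq_V.
have [eq_UV count_U] := balanced_double_count b_gt0
  (etrans (cardsID C _) (card_Uset n)) (etrans (cardsID C _) (card_Vset n)) eq_U eq_V.
move: eq_UV count_U; rewrite (matched (Uset n)) (matched (Vset n)).
rewrite setC_Uset setC_Vset (EabC _ (Vset n)) => eq_UV count_U.
split; first by lia.
by rewrite -count_U natrM [X in (X / _)%R]mulrC mulfK // pnatr_eq0.
Qed.
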